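(* Consider the two-dimensional map defined below and suppose there is no heterogeneity in speculative trading strategies, i.e. either $(w^F,w^C)=(1,0)$ or $(w^F,w^C)=(0,1)$. Then the map has a unique equilibrium (fixed point) $P_1=(\bar e_1,\Delta\bar y_1)$ given by $$\bar e_1=-\Omega\,\Delta\bar y,\qquad \Delta\bar y_1=\Delta y^{BP},$$ i.e. $P_1=(-\Omega\Delta y^{BP},\Delta y^{BP})$. If $w^F=1$ and $w^C=0$, then $P_1$ is locally stable. If $w^F=0$ and $w^C=1$, then $P_1$ is unstable.
   Context: The state variables are the (log) exchange rate $e_t$ and the output growth rate $\Delta y_t$, evolving according to the map $$e_t=e_{t-1}+(\mu+\rho)\left[w^F\left(-\Omega\Delta y_{t-1}-e_{t-1}\right)^3+w^C\left(e_{t-1}+\Omega\Delta y_{t-1}\right)\right],$$ $$\Delta y_t=\Delta y_{t-1}+w^{flex}\beta\left\{\Delta y^{BP}-\gamma\left[w^F\left(-\Omega\Delta y_{t-1}-e_{t-1}\right)^3+w^C\left(e_{t-1}+\Omega\Delta y_{t-1}\right)\right]-\Delta y_{t-1}\right\},$$ where $\mu>0$, $\rho>0$, $0<\beta<1$, $0<\Omega<1$, $0<w^{flex}<1$, $\Delta y^{BP}\in\mathbb{R}$ is a constant, $\gamma=\frac{(1-\theta)(\mu+\rho)}{\theta\pi}>0$ with $\theta\in(0,1)$, $\pi>0$, and $w^F,w^C\in[0,1]$ are the shares of fundamentalists and chartists with $w^F+w^C=1$. An equilibrium is a fixed point $(\bar e,\Delta\bar y)$ of this map; local stability refers to the fixed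 point of the map. *)

From Stdlib Require Import Reals.
Open Scope R_scope.

Definition gamma_of (theta pi_ mu rho : R) : R :=
  (1 - theta) * (mu + rho) / (theta * pi_).

Definition spec_term (wF wC Om e dy : R) : R :=
  wF * (- Om * dy - e) ^ 3 + wC * (e + Om * dy).

Definition fx_map (mu rho beta Om wflex dyBP gamma wF wC : R) (p : R * R) : R * R :=
  let e := fst p in
  let dy := snd p in
  (e + (mu + rho) * spec_term wF wC Om e dy,
   dy + wflex * beta * (dyBP - gamma * spec_term wF wC Om e dy - dy)).

Definition dist2 (p q : R * R) : R :=
  sqrt ((fst p - fst q) ^ 2 + (snd p - snd q) ^ 2).

Definition is_fixed_point (f : R * R -> R * R) (x : R * R) : Prop := f x = x.

Definition lyapunov_stable (f : R * R -> R * R) (x : R * R) : Prop :=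
  forall eps, 0 < eps -> exists delta, 0 < delta /\
    forall p, dist2 p x < delta -> forall n : nat, dist2 (Nat.iter n f p) x < eps.

Definition locally_attracting (f : R * R -> R * R) (x : R * R) : Prop :=
  exists delta, 0 < delta /\
    forall p, dist2 p x < delta -> Un_cv (fun n => dist2 (Nat.iter n f p) x) 0.

Definition locally_stable (f : R * R -> R * R) (x : R * R) : Prop :=
  is_fixed_point f x /\ lyapunov_stable f x /\ locally_attracting f x.

Definition unstable (f : R * R -> R * R) (x : R * R) : Prop :=
  is_fixed_point f x /\ ~ lyapunov_stable f x.

From Stdlib Require Import Reals Lra Psatz.
Open Scope R_scope.

(* In the deviations v = e + Om dyBP, x = dy - dyBP from P1, with u = v + Om x,
   k = mu + rho and c = wflex beta, the fundamentalist map reads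
   v' = v - k u^3, x' = (1 - c) x + c gamma u^3.  Its Jacobian at P1 has the
   eigenvalue 1, so stability is a nonlinear effect: for a = k / (2 c gamma) the
   weighted norm W = |v| + a |x| satisfies W' <= W - kap W^3 near P1, which gives
   Lyapunov stability and W -> 0 along orbits.  The chartist map is linear; its
   characteristic polynomial takes the value -k c < 0 at 1, so it has an
   eigenvalue lam > 1, and the corresponding left eigenvector is a linear
   functional multiplied by lam at each step, which pushes orbits starting
   arbitrarily close to P1 away from it. *)

Lemma dist2_ge0 (p q : R * R) : 0 <= dist2 p q.
Proof. apply sqrt_pos. Qed.

Lemma dist2_ge_abs_fst (p q : R * R) : Rabs (fst p - fst q) <= dist2 p q.
Proof.
  unfold dist2. rewrite <- sqrt_Rsqr_abs. apply sqrt_le_1_alt.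
  unfold Rsqr. pose proof (pow2_ge_0 (snd p - snd q)). lra.
Qed.

Lemma dist2_ge_abs_snd (p q : R * R) : Rabs (snd p - snd q) <= dist2 p q.
Proof.
  unfold dist2. rewrite <- sqrt_Rsqr_abs. apply sqrt_le_1_alt.
  unfold Rsqr. pose proof (pow2_ge_0 (fst p - fst q)). lra.
Qed.

Lemma dist2_le_abs_sum (p q : R * R) :
  dist2 p q <= Rabs (fst p - fst q) + Rabs (snd p - snd q).
Proof.
  set (s := Rabs (fst p - fst q) + Rabs (snd p - snd q)).
  pose proof (Rabs_pos (fst p - fst q)); pose proof (Rabs_pos (snd p - snd q)).
  unfold dist2. rewrite <- (sqrt_pow2 s) by (unfold s; lra). apply sqrt_le_1_alt.
  rewrite <- (pow2_abs (fst p - fst q)), <- (pow2_abs (snd p - snd q)).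
  unfold s. nra.
Qed.

Definition wdist (a : R) (p q : R * R) : R :=
  Rabs (fst p - fst q) + a * Rabs (snd p - snd q).

Lemma wdist_le_dist2 (a : R) (p q : R * R) : 0 <= a -> wdist a p q <= (1 + a) * dist2 p q.
Proof.
  intro Ha. unfold wdist. pose proof (dist2_ge_abs_fst p q); pose proof (dist2_ge_abs_snd p q). nra.
Qed.

Lemma dist2_le_wdist (a : R) (p q : R * R) : 0 < a -> dist2 p q <= (1 + / a) * wdist a p q.
Proof.
  intro Ha. unfold wdist. pose proof (dist2_le_abs_sum p q).
  pose proof (Rabs_pos (fst p - fst q)); pose proof (Rabs_pos (snd p - snd q)).
  assert (/ a * a = 1) by (field; lra).
  assert (0 < / a) by (apply Rinv_0_lt_compat; lra).
  nra.
Qed.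

Lemma abs_lincomb_le_dist2 (al be : R) (p q : R * R) :
  Rabs (al * (fst p - fst q) + be * (snd p - snd q)) <= (Rabs al + Rabs be) * dist2 p q.
Proof.
  eapply Rle_trans; [apply Rabs_triang|]. rewrite !Rabs_mult.
  pose proof (dist2_ge_abs_fst p q); pose proof (dist2_ge_abs_snd p q).
  pose proof (Rabs_pos al); pose proof (Rabs_pos be). nra.
Qed.

Section CubicDescent.

Variables (T : Type) (h : T -> T) (V : T -> R) (rho kap : R).
Hypothesis V_ge0 : forall q, 0 <= V q.
Hypothesis kap_gt0 : 0 < kap.
Hypothesis V_descent : forall q, V q <= rho -> V (h q) <= V q - kap * V q ^ 3.

Lemma descent_step_le (q : T) : V q <= rho -> V (h q) <= V q.
Proof.
  intro Hq. pose proof (V_descent q Hq). pose proof (pow_le (V q) 3 (V_ge0 q)). nra.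
Qed.

Variable p : T.
Hypothesis Vp_le : V p <= rho.

Lemma descent_iter_le (n : nat) : V (Nat.iter n h p) <= V p.
Proof.
  induction n as [|n IH]; simpl; [lra|].
  eapply Rle_trans; [apply descent_step_le|]; lra.
Qed.

Lemma descent_iter_above (eps : R) (n : nat) : 0 <= eps ->
  eps <= V (Nat.iter n h p) -> V (Nat.iter n h p) <= V p - INR n * (kap * eps ^ 3).
Proof.
  intro Heps. induction n as [|n IH]; intro Hn; [simpl; lra|].
  rewrite S_INR. change (Nat.iter (S n) h p) with (h (Nat.iter n h p)) in *.
  pose proof (descent_iter_le n) as Hle.
  remember (Nat.iter n h p) as q eqn:Eq.
  assert (Hq : V q <= rho) by lra.
  pose proof (V_descent q Hq) as Hstep.
  assert (Hq_eps : eps <= V q) by (pose proof (descent_step_le q Hq); lra).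
  assert (kap * eps ^ 3 <= kap * V q ^ 3)
    by (apply Rmult_le_compat_l; [lra | apply pow_incr; split; lra]).
  specialize (IH Hq_eps). lra.
Qed.

Lemma descent_iter_cv0 : Un_cv (fun n => V (Nat.iter n h p)) 0.
Proof.
  intros eps Heps.
  assert (Hd : 0 < kap * eps ^ 3) by (apply Rmult_lt_0_compat; [lra | apply pow_lt; lra]).
  destruct (INR_unbounded (V p / (kap * eps ^ 3))) as [N HN].
  exists N. intros n Hn. unfold R_dist. rewrite Rminus_0_r, Rabs_pos_eq by apply V_ge0.
  destruct (Rlt_le_dec (V (Nat.iter n h p)) eps) as [Hlt | Hge]; [exact Hlt | exfalso].
  pose proof (descent_iter_above eps n ltac:(lra) Hge).
  pose proof (V_ge0 (Nat.iter n h p)).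
  assert (INR N * (kap * eps ^ 3) <= INR n * (kap * eps ^ 3))
    by (apply Rmult_le_compat_r; [lra | apply le_INR; lia]).
  assert (V p < INR N * (kap * eps ^ 3)).
  { replace (V p) with (V p / (kap * eps ^ 3) * (kap * eps ^ 3)) by (field; lra).
    apply Rmult_lt_compat_r; lra. }
  lra.
Qed.

End CubicDescent.

Lemma locally_stable_of_cubic_descent (f : R * R -> R * R) (P : R * R) (V : R * R -> R)
    (C1 C2 rho kap : R) :
  f P = P -> 0 < C1 -> 0 < C2 -> 0 < rho -> 0 < kap ->
  (forall q, dist2 q P <= C1 * V q) -> (forall q, V q <= C2 * dist2 q P) ->
  (forall q, V q <= rho -> V (f q) <= V q - kap * V q ^ 3) ->
  locally_stable f P.
Proof.
  intros HfP HC1 HC2 Hrho Hkap Hlo Hhi Hdesc.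
  assert (V_ge0 : forall q, 0 <= V q).
  { intro q. pose proof (dist2_ge0 q P). pose proof (Hlo q). nra. }
  assert (Hnear : forall p, dist2 p P < rho / C2 -> V p <= rho).
  { intros p Hp. pose proof (Hhi p).
    assert (C2 * (rho / C2) = rho) by (field; lra). nra. }
  split; [exact HfP | split].
  - intros eps Heps. exists (Rmin (rho / C2) (eps / (C1 * C2))). split.
    { apply Rmin_glb_lt; apply Rdiv_lt_0_compat; nra. }
    intros p Hp n.
    pose proof (Rlt_le_trans _ _ _ Hp (Rmin_l _ _)) as Hp_rho.
    pose proof (Rlt_le_trans _ _ _ Hp (Rmin_r _ _)) as Hp_eps.
    pose proof (descent_iter_le _ f V rho kap V_ge0 Hkap Hdesc p (Hnear p Hp_rho) n).
    pose proof (Hlo (Nat.iter n f p)). pose proof (Hhi p).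
    assert (C1 * C2 * (eps / (C1 * C2)) = eps) by (field; lra).
    assert (0 < C1 * C2) by nra.
    nra.
  - exists (rho / C2). split; [apply Rdiv_lt_0_compat; lra|].
    intros p Hp eps Heps.
    destruct (descent_iter_cv0 _ f V rho kap V_ge0 Hkap Hdesc p (Hnear p Hp) (eps / C1))
      as [N HN]; [apply Rdiv_lt_0_compat; lra|].
    exists N. intros n Hn. specialize (HN n Hn). unfold R_dist in *.
    rewrite Rminus_0_r in *. rewrite Rabs_pos_eq in * by auto using dist2_ge0.
    pose proof (Hlo (Nat.iter n f p)).
    assert (C1 * (eps / C1) = eps) by (field; lra).
    nra.
Qed.

Lemma not_lyapunov_stable_of_eigenfunctional (f : R * R -> R * R) (P : R * R)
    (al be lam : R) :
  al <> 0 -> 1 < lam ->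
  (forall q, al * (fst (f q) - fst P) + be * (snd (f q) - snd P)
             = lam * (al * (fst q - fst P) + be * (snd q - snd P))) ->
  ~ lyapunov_stable f P.
Proof.
  intros Hal Hlam Heig Hst.
  set (psi := fun q : R * R => al * (fst q - fst P) + be * (snd q - snd P)).
  destruct (Hst 1 Rlt_0_1) as [delta [Hdelta Hnear]].
  set (p := (fst P + delta / 2, snd P)).
  assert (Hpsi_p : psi p = al * (delta / 2)) by (unfold psi, p; simpl; ring).
  assert (Hp : dist2 p P < delta).
  { eapply Rle_lt_trans; [apply dist2_le_abs_sum|]. unfold p; simpl.
    replace (fst P + delta / 2 - fst P) with (delta / 2) by ring.
    rewrite Rminus_diag, Rabs_R0, Rabs_pos_eq; lra. }
  assert (Hiter : forall n, psi (Nat.iter n f p) = lam ^ n * psi p).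
  { induction n as [|n IH]; [simpl; ring|].
    change (Nat.iter (S n) f p) with (f (Nat.iter n f p)).
    unfold psi at 1. rewrite Heig. fold (psi (Nat.iter n f p)). rewrite IH. simpl; ring. }
  assert (Hal_pos : 0 < Rabs al) by (apply Rabs_pos_lt; exact Hal).
  destruct (Pow_x_infinity lam ltac:(rewrite Rabs_pos_eq; lra)
              ((Rabs al + Rabs be + 1) / (Rabs al * (delta / 2)))) as [n Hn].
  specialize (Hn n (le_n n)).
  pose proof (abs_lincomb_le_dist2 al be (Nat.iter n f p) P) as Hbound.
  fold (psi (Nat.iter n f p)) in Hbound.
  rewrite Hiter, Hpsi_p, !Rabs_mult, (Rabs_pos_eq (delta / 2)) in Hbound by lra.
  pose proof (Hnear p Hp n). pose proof (Rabs_pos al); pose proof (Rabs_pos be).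
  assert (Rabs (lam ^ n) * (Rabs al * (delta / 2)) >= Rabs al + Rabs be + 1).
  { replace (Rabs al + Rabs be + 1)
      with ((Rabs al + Rabs be + 1) / (Rabs al * (delta / 2)) * (Rabs al * (delta / 2)))
      by (field; split; apply Rgt_not_eq; lra).
    apply Rle_ge, Rmult_le_compat_r; [nra | lra]. }
  nra.
Qed.

Lemma cube_wsum_le (a Om A X B : R) :
  0 <= a -> 0 <= Om -> 0 <= A <= 1 -> 0 <= X <= 1 -> 0 <= B -> A <= B + Om * X ->
  (A + a * X) ^ 3 <= 8 * B ^ 2 * A + (8 * Om ^ 2 + 4 * a ^ 3) * X.
Proof.
  intros Ha HOm HA HX HB HAB.
  assert (Hconvex : (A + a * X) ^ 3 <= 4 * (A ^ 3 + (a * X) ^ 3)).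
  { assert (0 <= 3 * (A + a * X) * (A - a * X) ^ 2)
      by (apply Rmult_le_pos; [nra | apply pow2_ge_0]).
    nra. }
  assert (HA3 : A ^ 3 <= 2 * B ^ 2 * A + 2 * Om ^ 2 * X).
  { assert (A ^ 2 <= (B + Om * X) ^ 2) by (apply pow_incr; lra).
    pose proof (pow2_ge_0 (B - Om * X)).
    assert (X ^ 2 * A <= X) by nra.
    nra. }
  assert (HX3 : (a * X) ^ 3 <= a ^ 3 * X).
  { replace ((a * X) ^ 3) with (a ^ 3 * X ^ 3) by ring.
    apply Rmult_le_compat_l; [apply pow_le; lra | nra]. }
  lra.
Qed.

Section FundamentalistDeviation.

Variables k c g Om a : R.
Hypotheses (k_gt0 : 0 < k) (c_gt0 : 0 < c) (c_lt1 : c < 1) (g_gt0 : 0 < g)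
  (Om_gt0 : 0 < Om) (Om_lt1 : Om < 1) (a_gt0 : 0 < a).
(* With this weight the cubic term a c g u^3 fed into the x-equation costs only half
   of the decrease k u^2 |v| that the fundamentalist term produces in |v|. *)
Hypothesis a_balance : 2 * a * c * g = k.

Lemma fundamentalist_dissipation (v x : R) :
  k * (v + Om * x) ^ 2 <= 1 -> 3 * k * Om * (v + Om * x) ^ 2 <= a * c ->
  Rabs (v - k * (v + Om * x) ^ 3) + a * Rabs ((1 - c) * x + c * g * (v + Om * x) ^ 3)
  <= Rabs v + a * Rabs x - k / 2 * (v + Om * x) ^ 2 * Rabs v - a * c / 2 * Rabs x.
Proof.
  intros Hs_le1 Hsmall.
  set (u := v + Om * x) in *. set (s := k * u ^ 2) in *.
  assert (Hs_ge0 : 0 <= s) by (unfold s; pose proof (pow2_ge_0 u); nra).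
  assert (Hu : Rabs u <= Rabs v + Om * Rabs x).
  { unfold u. eapply Rle_trans; [apply Rabs_triang|].
    rewrite Rabs_mult, (Rabs_pos_eq Om); lra. }
  assert (Hv' : Rabs (v - k * u ^ 3) <= (1 - s) * Rabs v + s * Om * Rabs x).
  { replace (v - k * u ^ 3) with ((1 - s) * v + - (s * Om) * x) by (unfold s, u; ring).
    eapply Rle_trans; [apply Rabs_triang|].
    rewrite !Rabs_mult, Rabs_Ropp, Rabs_mult, (Rabs_pos_eq (1 - s)), (Rabs_pos_eq s),
      (Rabs_pos_eq Om); lra. }
  assert (Hx' : Rabs ((1 - c) * x + c * g * u ^ 3)
                <= (1 - c) * Rabs x + c * g * u ^ 2 * (Rabs v + Om * Rabs x)).
  { eapply Rle_trans; [apply Rabs_triang|].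
    replace (c * g * u ^ 3) with ((c * g * u ^ 2) * u) by ring.
    assert (0 <= c * g * u ^ 2) by (pose proof (pow2_ge_0 u); nra).
    rewrite (Rabs_mult (1 - c)), (Rabs_mult (c * g * u ^ 2)), (Rabs_pos_eq (1 - c)),
      (Rabs_pos_eq (c * g * u ^ 2)) by lra.
    nra. }
  pose proof (Rabs_pos v); pose proof (Rabs_pos x).
  assert (0 <= Rabs x * (a * c - 3 * k * Om * u ^ 2)) by nra.
  assert (a * c * g = k / 2) by lra.
  unfold s in *. nra.
Qed.

Lemma fundamentalist_descent_local (v x : R) :
  Rabs v <= 1 -> Rabs x <= 1 ->
  k * (v + Om * x) ^ 2 <= 1 -> 3 * k * Om * (v + Om * x) ^ 2 <= a * c ->
  Rabs (v - k * (v + Om * x) ^ 3) + a * Rabs ((1 - c) * x + c * g * (v + Om * x) ^ 3)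
  <= (Rabs v + a * Rabs x)
     - Rmin (k / 16) (a * c / (16 * Om ^ 2 + 8 * a ^ 3)) * (Rabs v + a * Rabs x) ^ 3.
Proof.
  intros Hv Hx Hs_le1 Hs_small.
  set (kap := Rmin (k / 16) (a * c / (16 * Om ^ 2 + 8 * a ^ 3))).
  assert (Ha3 : 0 < a ^ 3) by (apply pow_lt; lra).
  assert (Hkap : 0 <= kap) by (apply Rlt_le, Rmin_glb_lt; apply Rdiv_lt_0_compat; nra).
  assert (Hkap1 : kap * 8 <= k / 2)
    by (pose proof (Rmin_l (k / 16) (a * c / (16 * Om ^ 2 + 8 * a ^ 3))); unfold kap; lra).
  assert (Hkap2 : kap * (8 * Om ^ 2 + 4 * a ^ 3) <= a * c / 2).
  { replace (a * c / 2) with (a * c / (16 * Om ^ 2 + 8 * a ^ 3) * (8 * Om ^ 2 + 4 * a ^ 3))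
      by (field; nra).
    apply Rmult_le_compat_r; [nra | apply Rmin_r]. }
  assert (Hu_inv : Rabs v <= Rabs (v + Om * x) + Om * Rabs x).
  { pose proof (Rabs_triang (v + Om * x) (- (Om * x))) as Htri.
    rewrite Rabs_Ropp, Rabs_mult, (Rabs_pos_eq Om) in Htri by lra.
    replace (v + Om * x + - (Om * x)) with v in Htri by ring. lra. }
  pose proof (fundamentalist_dissipation v x Hs_le1 Hs_small) as Hdiss.
  pose proof (cube_wsum_le a Om (Rabs v) (Rabs x) (Rabs (v + Om * x))
                ltac:(lra) ltac:(lra) (conj (Rabs_pos v) Hv) (conj (Rabs_pos x) Hx)
                (Rabs_pos _) Hu_inv) as Hcube.
  rewrite pow2_abs in Hcube.
  pose proof (Rabs_pos x).
  assert (0 <= (v + Om * x) ^ 2 * Rabs v)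
    by (apply Rmult_le_pos; [apply pow2_ge_0 | apply Rabs_pos]).
  nra.
Qed.

Lemma fundamentalist_cubic_descent :
  exists rho kap, 0 < rho /\ 0 < kap /\ forall v x, Rabs v + a * Rabs x <= rho ->
    Rabs (v - k * (v + Om * x) ^ 3) + a * Rabs ((1 - c) * x + c * g * (v + Om * x) ^ 3)
    <= (Rabs v + a * Rabs x) - kap * (Rabs v + a * Rabs x) ^ 3.
Proof.
  (* On |v|, |x| <= r we get u^2 <= 4 r^2, small enough for [fundamentalist_dissipation]. *)
  set (r := / (1 + 4 * k + 24 * g * Om)).
  assert (Hr : 0 < r) by (apply Rinv_0_lt_compat; nra).
  assert (Hr_inv : r * (1 + 4 * k + 24 * g * Om) = 1) by (unfold r; field; nra).
  assert (0 <= k * r) by nra.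
  assert (0 <= g * Om * r) by (apply Rmult_le_pos; nra).
  assert (Hr_k : 4 * k * r <= 1) by lra.
  assert (Hr_g : 24 * g * Om * r <= 1) by lra.
  assert (Hr1 : r <= 1) by lra.
  exists (r * Rmin 1 a), (Rmin (k / 16) (a * c / (16 * Om ^ 2 + 8 * a ^ 3))).
  split; [|split].
  { apply Rmult_lt_0_compat; [lra | apply Rmin_glb_lt; lra]. }
  { apply Rmin_glb_lt; apply Rdiv_lt_0_compat; [lra | nra | nra | ].
    pose proof (pow_lt a 3 a_gt0); nra. }
  intros v x Hsmall.
  pose proof (Rabs_pos v); pose proof (Rabs_pos x).
  assert (Hv : Rabs v <= r) by (pose proof (Rmin_l 1 a); nra).
  assert (Hx : Rabs x <= r) by (pose proof (Rmin_r 1 a); nra).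
  assert (Hu2 : (v + Om * x) ^ 2 <= r * (4 * r)).
  { assert (Rabs (v + Om * x) <= 2 * r).
    { eapply Rle_trans; [apply Rabs_triang|]. rewrite Rabs_mult, (Rabs_pos_eq Om); nra. }
    rewrite <- pow2_abs. pose proof (Rabs_pos (v + Om * x)). nra. }
  apply fundamentalist_descent_local; [lra | lra | nra |].
  apply (Rmult_le_reg_r (2 * g)); [lra|].
  assert (0 <= k * Om) by nra.
  assert (k * Om * (v + Om * x) ^ 2 <= k * Om * (4 * r)) by (apply Rmult_le_compat_l; nra).
  nra.
Qed.

End FundamentalistDeviation.

Lemma fx_map_fixed_point_iff (mu rho beta Om wflex dyBP g wF wC e dy : R) :
  mu + rho <> 0 -> wflex * beta <> 0 ->
  is_fixed_point (fx_map mu rho beta Om wflex dyBP g wF wC) (e, dy) <->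
  spec_term wF wC Om e dy = 0 /\ dy = dyBP.
Proof.
  intros Hk Hc. unfold is_fixed_point, fx_map; simpl. split.
  - intro Hfix. injection Hfix as He Hdy.
    assert (Hs : spec_term wF wC Om e dy = 0).
    { destruct (Rmult_integral (mu + rho) (spec_term wF wC Om e dy)); [lra | tauto | auto]. }
    rewrite Hs in Hdy. split; [exact Hs|].
    destruct (Rmult_integral (wflex * beta) (dyBP - g * 0 - dy)); [lra | tauto | lra].
  - intros [Hs ->]. rewrite Hs. f_equal; ring.
Qed.

Lemma spec_term_homogeneous_eq0 (wF wC Om e dy : R) :
  (wF = 1 /\ wC = 0) \/ (wF = 0 /\ wC = 1) ->
  spec_term wF wC Om e dy = 0 <-> e = - Om * dy.
Proof.
  unfold spec_term. intros [[-> ->] | [-> ->]]; split; intro H.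
  - destruct (Req_dec (- Om * dy - e) 0) as [Hz | Hnz]; [lra|].
    exfalso. apply (pow_nonzero _ 3 Hnz). lra.
  - rewrite H. ring.
  - lra.
  - rewrite H. ring.
Qed.

Lemma fundamentalist_lyapunov (mu rho beta Om wflex dyBP g : R) :
  0 < mu + rho -> 0 < wflex * beta -> wflex * beta < 1 -> 0 < g -> 0 < Om -> Om < 1 ->
  exists a r kap, 0 < a /\ 0 < r /\ 0 < kap /\
    forall q, wdist a q (- Om * dyBP, dyBP) <= r ->
      wdist a (fx_map mu rho beta Om wflex dyBP g 1 0 q) (- Om * dyBP, dyBP)
      <= wdist a q (- Om * dyBP, dyBP) - kap * wdist a q (- Om * dyBP, dyBP) ^ 3.
Proof.
  intros Hk Hc Hc1 Hg HOm HOm1.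
  set (k := mu + rho) in *. set (c := wflex * beta) in *.
  set (a := k / (2 * c * g)).
  assert (Ha : 0 < a) by (apply Rdiv_lt_0_compat; nra).
  assert (Hbal : 2 * a * c * g = k) by (unfold a; field; nra).
  destruct (fundamentalist_cubic_descent k c g Om a Hk Hc Hc1 Hg HOm HOm1 Ha Hbal)
    as (r & kap & Hr & Hkap & Hdesc).
  exists a, r, kap. split; [exact Ha | split; [exact Hr | split; [exact Hkap|]]].
  intros [e dy]. unfold wdist; cbn [fst snd].
  set (v := e - - Om * dyBP). set (x := dy - dyBP).
  replace (fst (fx_map mu rho beta Om wflex dyBP g 1 0 (e, dy)) - - Om * dyBP)
    with (v - k * (v + Om * x) ^ 3) by (unfold v, x, k, fx_map, spec_term; simpl; ring).
  replace (snd (fx_map mu rho beta Om wflex dyBP g 1 0 (e, dy)) - dyBP)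
    with ((1 - c) * x + c * g * (v + Om * x) ^ 3)
    by (unfold v, x, c, fx_map, spec_term; simpl; ring).
  apply Hdesc.
Qed.

Lemma quadratic_root_gt1 (T D : R) :
  1 - T + D < 0 -> exists lam, 1 < lam /\ lam ^ 2 - T * lam + D = 0.
Proof.
  intro Hneg.
  assert (Hdisc : (T - 2) ^ 2 < T ^ 2 - 4 * D) by lra.
  set (s := sqrt (T ^ 2 - 4 * D)).
  assert (Hs2 : s * s = T ^ 2 - 4 * D) by (apply sqrt_sqrt; pose proof (pow2_ge_0 (T - 2)); lra).
  assert (Hs0 : 0 <= s) by apply sqrt_pos.
  exists ((T + s) / 2). split.
  - assert (2 - T < s) by nra. lra.
  - replace ((T + s) / 2) with ((T + s) * / 2) by reflexivity. nra.
Qed.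

Definition chartist_jacobian_trace (k c g Om : R) : R := 2 + k - c - c * g * Om.
Definition chartist_jacobian_det (k c g Om : R) : R := (1 + k) * (1 - c) - c * g * Om.

Lemma chartist_left_eigenvector (mu rho beta Om wflex dyBP g lam : R) :
  let k := mu + rho in let c := wflex * beta in
  lam ^ 2 - chartist_jacobian_trace k c g Om * lam + chartist_jacobian_det k c g Om = 0 ->
  forall q, let P := (- Om * dyBP, dyBP) in
    let q' := fx_map mu rho beta Om wflex dyBP g 0 1 q in
    (lam - 1 + c) * (fst q' - fst P) + (lam - 1) * Om * (snd q' - snd P)
    = lam * ((lam - 1 + c) * (fst q - fst P) + (lam - 1) * Om * (snd q - snd P)).
Proof.
  intros k c Hchar [e dy] P q'. unfold q', P, fx_map, spec_term; simpl.
  apply Rminus_diag_uniq.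
  transitivity (- (lam ^ 2 - chartist_jacobian_trace k c g Om * lam
                   + chartist_jacobian_det k c g Om) * (e + Om * dy)).
  - unfold chartist_jacobian_trace, chartist_jacobian_det, k, c. ring.
  - rewrite Hchar. ring.
Qed.

Theorem proposition1
  (mu rho beta Om wflex dyBP theta pi_ wF wC : R)
  (Hmu : 0 < mu) (Hrho : 0 < rho)
  (Hbeta0 : 0 < beta) (Hbeta1 : beta < 1)
  (HOm0 : 0 < Om) (HOm1 : Om < 1)
  (Hw0 : 0 < wflex) (Hw1 : wflex < 1)
  (Htheta0 : 0 < theta) (Htheta1 : theta < 1) (Hpi : 0 < pi_)
  (Hhom : (wF = 1 /\ wC = 0) \/ (wF = 0 /\ wC = 1)) :
  let f := fx_map mu rho beta Om wflex dyBP (gamma_of theta pi_ mu rho) wF wC in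
  let P1 := (- Om * dyBP, dyBP) in
  (forall p : R * R, is_fixed_point f p <-> p = P1) /\
  (wF = 1 /\ wC = 0 -> locally_stable f P1) /\
  (wF = 0 /\ wC = 1 -> unstable f P1).
Proof.
  assert (Hk : 0 < mu + rho) by lra.
  assert (Hc : 0 < wflex * beta) by nra.
  assert (Hc1 : wflex * beta < 1) by nra.
  assert (Hg : 0 < gamma_of theta pi_ mu rho) by (apply Rdiv_lt_0_compat; nra).
  intros f P1.
  assert (Hfix : forall p, is_fixed_point f p <-> p = P1).
  { intros [e dy]. unfold f, P1.
    rewrite fx_map_fixed_point_iff, spec_term_homogeneous_eq0 by (auto; lra).
    split; [intros [-> ->]; reflexivity | intro Heq; injection Heq as -> ->; auto]. }
  split; [exact Hfix | split]; intros [-> ->].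
  - destruct (fundamentalist_lyapunov mu rho beta Om wflex dyBP (gamma_of theta pi_ mu rho)
                Hk Hc Hc1 Hg HOm0 HOm1) as (a & r & kap & Ha & Hr & Hkap & Hdesc).
    apply (locally_stable_of_cubic_descent f P1 (fun q => wdist a q P1) (1 + / a) (1 + a) r kap);
      [apply Hfix; reflexivity | | lra | exact Hr | exact Hkap | | | exact Hdesc].
    + pose proof (Rinv_0_lt_compat a Ha). lra.
    + intro q. apply dist2_le_wdist, Ha.
    + intro q. apply wdist_le_dist2. lra.
  - destruct (quadratic_root_gt1
                (chartist_jacobian_trace (mu + rho) (wflex * beta) (gamma_of theta pi_ mu rho) Om)
                (chartist_jacobian_det (mu + rho) (wflex * beta) (gamma_of theta pi_ mu rho) Om))
      as (lam & Hlam & Hchar).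
    { unfold chartist_jacobian_trace, chartist_jacobian_det. nra. }
    split; [apply Hfix; reflexivity|].
    apply (not_lyapunov_stable_of_eigenfunctional f P1 (lam - 1 + wflex * beta) ((lam - 1) * Om) lam);
      [lra | exact Hlam | exact (chartist_left_eigenvector mu rho beta Om wflex dyBP _ lam Hchar)].
Qed.
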